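(* Let $(x_n)$ be a bounded sequence in a Banach space $X$ with $c_J(x_n)>0$. Then there is a block sequence $(z_l)$ of $(x_n)$ such that $\|z_l\|\to c_J(x_n)$ as $l\to\infty$ and $$(1-2^{-m})\,c_J(x_n)\sum_{l=m}^\infty|\alpha_l|\le\Big\|\sum_{l=m}^\infty\alpha_l z_l\Big\|\le(1+2^{-m})\,c_J(x_n)\sum_{l=m}^\infty|\alpha_l|$$ for all $m\in\mathbb N$ and all $(\alpha_l)\in\ell^1$.
   Context: For a bounded sequence $(x_n)$ in a Banach space, define $c_m=\inf\{\|\sum_{n\ge m}\alpha_n x_n\|: \sum_{n\ge m}|\alpha_n|=1\}$. This is an increasing sequence in $m$; put $c_J(x_n)=\sup_m c_m$. A sequence $(z_l)$ is a block sequence of $(x_n)$ if there are finite sets $A_l\subset\mathbb N$ with $\max A_l<\min A_{l+1}$ and scalars $(\lambda_k)$ such that, for every $l$, $\sum_{k\in A_l}|\lambda_k|=1$ and $z_l=\sum_{k\in A_l}\lambda_k x_k$. *)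

From Stdlib Require Import Reals List.
Open Scope R_scope.

Record NormedSpace := {
  carrier :> Type;
  vzero : carrier;
  vadd : carrier -> carrier -> carrier;
  vopp : carrier -> carrier;
  vscal : R -> carrier -> carrier;
  vnorm : carrier -> R;
  vaddA : forall u v w, vadd u (vadd v w) = vadd (vadd u v) w;
  vaddC : forall u v, vadd u v = vadd v u;
  vadd0 : forall u, vadd u vzero = u;
  vaddN : forall u, vadd u (vopp u) = vzero;
  vscalA : forall a b u, vscal a (vscal b u) = vscal (a * b) u;
  vscal1 : forall u, vscal 1 u = u;
  vscalDr : forall a u v, vscal a (vadd u v) = vadd (vscal a u) (vscal a v);
  vscalDl : forall a b u, vscal (a + b) u = vadd (vscal a u) (vscal b u);
  vnorm_eq0 : forall u, vnorm u = 0 -> u = vzero;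
  vnorm_triangle : forall u v, vnorm (vadd u v) <= vnorm u + vnorm v;
  vnorm_scal : forall a u, vnorm (vscal a u) = Rabs a * vnorm u
}.

Arguments vzero {_}.
Arguments vadd {_} _ _.
Arguments vopp {_} _.
Arguments vscal {_} _ _.
Arguments vnorm {_} _.

Definition vsub {X : NormedSpace} (u v : X) : X := vadd u (vopp v).

Definition vcauchy {X : NormedSpace} (u : nat -> X) : Prop :=
  forall eps, 0 < eps -> exists N, forall p q, (N <= p)%nat -> (N <= q)%nat ->
    vnorm (vsub (u p) (u q)) < eps.

Definition vlim {X : NormedSpace} (u : nat -> X) (l : X) : Prop :=
  forall eps, 0 < eps -> exists N, forall n, (N <= n)%nat -> vnorm (vsub (u n) l) < eps.

Record BanachSpace := {
  bspace :> NormedSpace;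
  bcomplete : forall u : nat -> bspace, vcauchy u -> exists l, vlim u l
}.

Fixpoint vpsum {X : NormedSpace} (f : nat -> X) (n : nat) : X :=
  match n with
  | O => vzero
  | S n' => vadd (vpsum f n') (f n')
  end.

Definition has_sum {X : NormedSpace} (f : nat -> X) (s : X) : Prop :=
  vlim (vpsum f) s.

Definition vlsum {X : NormedSpace} (f : nat -> X) (A : list nat) : X :=
  fold_right (fun k acc => vadd (f k) acc) vzero A.

Definition rlsum (f : nat -> R) (A : list nat) : R :=
  fold_right (fun k acc => f k + acc) 0 A.

Definition bounded_seq {X : NormedSpace} (x : nat -> X) : Prop :=
  exists M, forall n, vnorm (x n) <= M.

Definition ell1 (alpha : nat -> R) : Prop :=
  exists L, infinite_sum (fun n => Rabs (alpha n)) L.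

Definition is_inf (E : R -> Prop) (r : R) : Prop :=
  (forall y, E y -> r <= y) /\ (forall b, (forall y, E y -> b <= y) -> b <= r).

(** The set { || sum_{n>=m} alpha_n x_n || : sum_{n>=m} |alpha_n| = 1 }.
    The coefficients are reindexed: alpha k is the coefficient of x (m+k). *)
Definition cm_set {X : NormedSpace} (x : nat -> X) (m : nat) (r : R) : Prop :=
  exists (alpha : nat -> R) (s : X),
    infinite_sum (fun k => Rabs (alpha k)) 1 /\
    has_sum (fun k => vscal (alpha k) (x (m + k)%nat)) s /\
    r = vnorm s.

Definition is_cm {X : NormedSpace} (x : nat -> X) (m : nat) (c : R) : Prop :=
  is_inf (cm_set x m) c.

Definition is_cJ {X : NormedSpace} (x : nat -> X) (c : R) : Prop :=
  is_lub (fun r => exists m, is_cm x m r) c.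

Definition is_block_seq {X : NormedSpace} (x : nat -> X) (z : nat -> X) : Prop :=
  exists (A : nat -> list nat) (lam : nat -> R),
    (forall l, NoDup (A l)) /\
    (forall l i j, In i (A l) -> In j (A (S l)) -> (i < j)%nat) /\
    (forall l, rlsum (fun k => Rabs (lam k)) (A l) = 1) /\
    (forall l, z l = vlsum (fun k => vscal (lam k) (x k)) (A l)).

(** Write [comb x γ a b] for the finite combination [Σ_{a <= k < b} γ_k x_k] and
    [mass γ a b] for [Σ_{a <= k < b} |γ_k|].
    - Every normalized finite combination supported in [[m, ∞)] competes in the
      infimum defining [c_m]; hence [c_m · mass <= ‖comb‖] for such combinations.
      Conversely, truncating and renormalizing a nearly optimal series shows that
      [c_N] is approached by normalized finite combinations starting at [N].
    - Since [c_J = sup_m c_m > 0], for each [l] some tail of [(x_n)] satisfies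
      [‖comb‖ >= (1 - 2^-l) c_J · mass], and beyond any index there is a
      normalized block of norm at most [c_N + 2^-l c_J <= (1 + 2^-l) c_J].
    - Laying such blocks [z_l] consecutively, block [l] beyond the [l]-th tail,
      a finite combination [Σ_{l >= m} α_l z_l] is a finite combination of the
      [x_n] in the [m]-th tail with mass [Σ |α_l|]: this gives the lower bound,
      the triangle inequality gives the upper bound, and both pass to the limit. *)

From Stdlib Require Import Reals List Lia Lra Classical ClassicalEpsilon.
Open Scope R_scope.

Section NormedSpaceFacts.
Variable X : NormedSpace.
Implicit Types u v : X.

Lemma vscal0 u : vscal 0 u = vzero.
Proof. apply vnorm_eq0. rewrite vnorm_scal, Rabs_R0. ring. Qed.

Lemma vnorm0 : vnorm (@vzero X) = 0.
Proof. rewrite <- (vscal0 vzero), vnorm_scal, Rabs_R0. ring. Qed.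

Lemma vscalr0 a : vscal a (@vzero X) = vzero.
Proof. apply vnorm_eq0. rewrite vnorm_scal, vnorm0. ring. Qed.

Lemma vadd0l u : vadd vzero u = u.
Proof. rewrite vaddC. apply vadd0. Qed.

Lemma vopp_scal u : vopp u = vscal (-1) u.
Proof.
  assert (Hsum : vadd u (vscal (-1) u) = vzero).
  { rewrite <- (vscal1 _ u) at 1. rewrite <- vscalDl.
    replace (1 + -1) with 0 by ring. apply vscal0. }
  rewrite <- (vadd0 _ (vscal (-1) u)), <- (vaddN _ u), vaddA.
  rewrite (vaddC _ (vscal (-1) u) u), Hsum, vadd0l. reflexivity.
Qed.

Lemma vnorm_ge0 u : 0 <= vnorm u.
Proof.
  pose proof (vnorm_triangle _ u (vopp u)) as Htri.
  rewrite vaddN, vnorm0, vopp_scal, vnorm_scal, Rabs_left in Htri by lra. lra.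
Qed.

Lemma vsub_add u v : vadd (vsub u v) v = u.
Proof.
  unfold vsub. rewrite <- vaddA, (vaddC _ (vopp v) v), vaddN. apply vadd0.
Qed.

Lemma vsub_sym u v : vnorm (vsub u v) = vnorm (vsub v u).
Proof.
  unfold vsub. rewrite !vopp_scal.
  replace (vadd u (vscal (-1) v)) with (vscal (-1) (vadd v (vscal (-1) u))).
  - rewrite vnorm_scal, Rabs_left by lra. ring.
  - rewrite vscalDr, vscalA. replace (-1 * -1) with 1 by ring.
    rewrite vscal1, vaddC. reflexivity.
Qed.

Lemma vnorm_sub_le u v : Rabs (vnorm u - vnorm v) <= vnorm (vsub u v).
Proof.
  pose proof (vnorm_triangle _ (vsub u v) v) as Hu. rewrite vsub_add in Hu.
  pose proof (vnorm_triangle _ (vsub v u) u) as Hv. rewrite vsub_add, <- vsub_sym in Hv.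
  unfold Rabs; destruct Rcase_abs; lra.
Qed.

Lemma vlim_norm (u : nat -> X) l : vlim u l -> Un_cv (fun n => vnorm (u n)) (vnorm l).
Proof.
  intros Hlim eps Heps. destruct (Hlim eps Heps) as [N HN]. exists N. intros n Hn.
  eapply Rle_lt_trans; [apply vnorm_sub_le | now apply HN].
Qed.

Lemma vlim_eventually (u : nat -> X) l N : (forall n, (N <= n)%nat -> u n = l) -> vlim u l.
Proof.
  intros Hu eps Heps. exists N. intros n Hn.
  unfold vsub. rewrite Hu, vaddN, vnorm0 by exact Hn. exact Heps.
Qed.

End NormedSpaceFacts.

Section ListSums.
Variable X : NormedSpace.

Lemma vlsum_app (f : nat -> X) l1 l2 : vlsum f (l1 ++ l2) = vadd (vlsum f l1) (vlsum f l2).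
Proof. induction l1 as [|k l1 IH]; simpl; [now rewrite vadd0l | now rewrite IH, vaddA]. Qed.

Lemma vlsum_ext (f g : nat -> X) l : (forall k, In k l -> f k = g k) -> vlsum f l = vlsum g l.
Proof.
  induction l as [|k l IH]; intros Hfg; simpl; auto.
  rewrite Hfg by now left. rewrite IH; [reflexivity |]. intros j Hj; apply Hfg; now right.
Qed.

Lemma vlsum_zero (f : nat -> X) l : (forall k, In k l -> f k = vzero) -> vlsum f l = vzero.
Proof.
  induction l as [|k l IH]; intros Hf; simpl; auto.
  rewrite Hf by now left. rewrite IH; [apply vadd0 |]. intros j Hj; apply Hf; now right.
Qed.

Lemma vlsum_scal r (f : nat -> X) l : vlsum (fun k => vscal r (f k)) l = vscal r (vlsum f l).
Proof. induction l as [|k l IH]; simpl; [now rewrite vscalr0 | now rewrite IH, vscalDr]. Qed.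

Lemma vlsum_norm_le (f : nat -> X) l : vnorm (vlsum f l) <= rlsum (fun k => vnorm (f k)) l.
Proof.
  induction l as [|k l IH]; simpl; [rewrite vnorm0; lra |].
  pose proof (vnorm_triangle _ (f k) (vlsum f l)). lra.
Qed.

Lemma vpsum_ext (f g : nat -> X) n : (forall j, f j = g j) -> vpsum f n = vpsum g n.
Proof. intros Hfg. induction n as [|n IH]; simpl; [reflexivity | now rewrite IH, Hfg]. Qed.

Lemma vlsum_seq (f : nat -> X) a n : vlsum f (seq a n) = vpsum (fun j => f (a + j)%nat) n.
Proof.
  induction n as [|n IH]; [reflexivity |].
  rewrite seq_S, vlsum_app, IH. simpl. now rewrite vadd0.
Qed.

End ListSums.

Lemma rlsum_app f l1 l2 : rlsum f (l1 ++ l2) = rlsum f l1 + rlsum f l2.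
Proof. induction l1 as [|k l1 IH]; simpl; [ring | rewrite IH; ring]. Qed.

Lemma rlsum_ext f g l : (forall k, In k l -> f k = g k) -> rlsum f l = rlsum g l.
Proof.
  induction l as [|k l IH]; intros Hfg; simpl; auto.
  rewrite Hfg by now left. rewrite IH; [reflexivity |]. intros j Hj; apply Hfg; now right.
Qed.

Lemma rlsum_zero f l : (forall k, In k l -> f k = 0) -> rlsum f l = 0.
Proof.
  induction l as [|k l IH]; intros Hf; simpl; auto.
  rewrite Hf by now left. rewrite IH; [ring |]. intros j Hj; apply Hf; now right.
Qed.

Lemma rlsum_scal r f l : rlsum (fun k => r * f k) l = r * rlsum f l.
Proof. induction l as [|k l IH]; simpl; [ring | rewrite IH; ring]. Qed.

Lemma rlsum_le f g l : (forall k, In k l -> f k <= g k) -> rlsum f l <= rlsum g l.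
Proof.
  induction l as [|k l IH]; intros Hfg; simpl; [lra |].
  pose proof (Hfg k (or_introl eq_refl)). pose proof (IH (fun j Hj => Hfg j (or_intror Hj))). lra.
Qed.

Lemma rlsum_seq f a n : rlsum f (seq a (S n)) = sum_f_R0 (fun j => f (a + j)%nat) n.
Proof.
  induction n as [|n IH]; [simpl; now rewrite Nat.add_0_r, Rplus_0_r |].
  rewrite seq_S, rlsum_app, IH. simpl. ring.
Qed.
(** * Finite combinations over index ranges *)

Definition comb {X : NormedSpace} (x : nat -> X) (γ : nat -> R) (a b : nat) : X :=
  vlsum (fun k => vscal (γ k) (x k)) (seq a (b - a)).

Definition mass (γ : nat -> R) (a b : nat) : R :=
  rlsum (fun k => Rabs (γ k)) (seq a (b - a)).

Definition restr (γ : nat -> R) (a b k : nat) : R :=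
  if andb (Nat.leb a k) (Nat.ltb k b) then γ k else 0.

Lemma restr_in γ a b k : (a <= k < b)%nat -> restr γ a b k = γ k.
Proof.
  intros Hk. unfold restr.
  destruct (Nat.leb_spec a k), (Nat.ltb_spec k b); simpl; auto; lia.
Qed.

Lemma restr_out γ a b k : ~ (a <= k < b)%nat -> restr γ a b k = 0.
Proof.
  intros Hk. unfold restr.
  destruct (Nat.leb_spec a k), (Nat.ltb_spec k b); simpl; auto; lia.
Qed.

Lemma in_range k a b : In k (seq a (b - a)) <-> (a <= k < b)%nat.
Proof. rewrite in_seq. lia. Qed.

Lemma seq_range_split a b c : (a <= b <= c)%nat ->
  seq a (c - a) = seq a (b - a) ++ seq b (c - b).
Proof.
  intros Hb. replace (c - a)%nat with ((b - a) + (c - b))%nat by lia.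
  rewrite seq_app. do 2 f_equal. lia.
Qed.

Lemma mass_nonneg γ a b : 0 <= mass γ a b.
Proof.
  unfold mass. rewrite <- (rlsum_zero (fun _ => 0) (seq a (b - a))) by auto.
  apply rlsum_le. intros. apply Rabs_pos.
Qed.

Lemma mass_split γ a b c : (a <= b <= c)%nat -> mass γ a c = mass γ a b + mass γ b c.
Proof. intros Hb. unfold mass. now rewrite (seq_range_split a b c), rlsum_app. Qed.

Lemma mass_ext γ δ a b : (forall k, (a <= k < b)%nat -> γ k = δ k) -> mass γ a b = mass δ a b.
Proof. intros H. apply rlsum_ext. intros k Hk. rewrite H; [reflexivity | now apply in_range]. Qed.

Lemma mass_scal r γ a b : mass (fun k => r * γ k) a b = Rabs r * mass γ a b.
Proof.
  unfold mass. rewrite <- rlsum_scal. apply rlsum_ext. intros. apply Rabs_mult.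
Qed.

Lemma mass_restr γ a b p q : (p <= a <= b)%nat -> (b <= q)%nat ->
  mass (restr γ a b) p q = mass γ a b.
Proof.
  intros Ha Hb. rewrite (mass_split _ p a q), (mass_split _ a b q) by lia.
  unfold mass at 1 3. rewrite !rlsum_zero; [| intros k Hk; apply in_range in Hk ..].
  - rewrite (mass_ext _ γ a b); [ring |]. intros. now apply restr_in.
  - rewrite restr_out, Rabs_R0; [reflexivity | lia].
  - rewrite restr_out, Rabs_R0; [reflexivity | lia].
Qed.

Lemma mass_shift (α : nat -> R) a n :
  mass (fun k => α (k - a)%nat) a (a + S n) = sum_f_R0 (fun j => Rabs (α j)) n.
Proof.
  unfold mass. replace (a + S n - a)%nat with (S n) by lia. rewrite rlsum_seq.
  apply sum_eq. intros j _. now replace (a + j - a)%nat with j by lia.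
Qed.

Section Combinations.
Variable X : NormedSpace.
Variable x : nat -> X.

Lemma comb_split γ a b c : (a <= b <= c)%nat ->
  comb x γ a c = vadd (comb x γ a b) (comb x γ b c).
Proof. intros Hb. unfold comb. now rewrite (seq_range_split a b c), vlsum_app. Qed.

Lemma comb_ext γ δ a b : (forall k, (a <= k < b)%nat -> γ k = δ k) -> comb x γ a b = comb x δ a b.
Proof. intros H. apply vlsum_ext. intros k Hk. rewrite H; [reflexivity | now apply in_range]. Qed.

Lemma comb_scal r γ a b : comb x (fun k => r * γ k) a b = vscal r (comb x γ a b).
Proof.
  unfold comb. rewrite <- vlsum_scal. apply vlsum_ext. intros. now rewrite vscalA.
Qed.

Lemma comb_restr γ a b p q : (p <= a <= b)%nat -> (b <= q)%nat ->
  comb x (restr γ a b) p q = comb x γ a b.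
Proof.
  intros Ha Hb. rewrite (comb_split _ p a q), (comb_split _ a b q) by lia.
  unfold comb at 1 3. rewrite !vlsum_zero; [| intros k Hk; apply in_range in Hk ..].
  - rewrite vadd0l, vadd0. apply comb_ext. intros. now apply restr_in.
  - rewrite restr_out by lia. apply vscal0.
  - rewrite restr_out by lia. apply vscal0.
Qed.

Lemma comb_shift (α : nat -> R) a n :
  comb x (fun k => α (k - a)%nat) a (a + n) = vpsum (fun j => vscal (α j) (x (a + j)%nat)) n.
Proof.
  unfold comb. replace (a + n - a)%nat with n by lia. rewrite vlsum_seq.
  apply vpsum_ext. intros j. now replace (a + j - a)%nat with j by lia.
Qed.
End Combinations.

Lemma infinite_sum_eventually f l N :
  (forall n, (N <= n)%nat -> sum_f_R0 f n = l) -> infinite_sum f l.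
Proof.
  intros Hf eps Heps. exists N. intros n Hn.
  unfold R_dist. rewrite Hf, Rminus_diag, Rabs_R0 by exact Hn. exact Heps.
Qed.

Lemma inf_exists (E : R -> Prop) b :
  (exists y, E y) -> (forall y, E y -> b <= y) -> exists c, is_inf E c.
Proof.
  intros [y Hy] Hb.
  destruct (completeness (fun r => E (- r))) as [l [Hub Hleast]].
  - exists (- b). intros r Hr. specialize (Hb _ Hr). lra.
  - exists (- y). now rewrite Ropp_involutive.
  - exists (- l). split.
    + intros z Hz. assert (- z <= l) by (apply Hub; now rewrite Ropp_involutive). lra.
    + intros c Hc. assert (l <= - c); [| lra].
      apply Hleast. intros r Hr. specialize (Hc _ Hr). lra.
Qed.

Lemma inf_approx (E : R -> Prop) c eps : is_inf E c -> 0 < eps -> exists y, E y /\ y < c + eps.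
Proof.
  intros [_ Hgreatest] Heps. apply NNPP. intros Hnone.
  assert (c + eps <= c); [| lra].
  apply Hgreatest. intros y Hy. apply Rnot_lt_le. intros Hlt. apply Hnone. now exists y.
Qed.

Lemma lub_approx (E : R -> Prop) c eps : is_lub E c -> 0 < eps -> exists y, E y /\ c - eps < y.
Proof.
  intros [_ Hleast] Heps. apply NNPP. intros Hnone.
  assert (c <= c - eps); [| lra].
  apply Hleast. intros y Hy. apply Rnot_lt_le. intros Hlt. apply Hnone. now exists y.
Qed.

Lemma Un_cv_scal (u : nat -> R) a l : Un_cv u l -> Un_cv (fun n => a * u n) (a * l).
Proof.
  intros Hu. apply CV_mult; [| exact Hu].
  intros eps Heps. exists O. intros. unfold R_dist. rewrite Rminus_diag, Rabs_R0. exact Heps.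
Qed.

Lemma limit_of_scaled_bounds (u w : nat -> R) a b lu lw :
  Un_cv u lu -> Un_cv w lw -> (forall n, a * w n <= u n <= b * w n) ->
  a * lw <= lu <= b * lw.
Proof.
  intros Hu Hw Hbnd. split.
  - apply Rle_cv_lim with (Un := fun n => a * w n) (Vn := u); [intros n; apply Hbnd | apply Un_cv_scal, Hw | exact Hu].
  - apply Rle_cv_lim with (Un := u) (Vn := fun n => b * w n); [intros n; apply Hbnd | exact Hu | apply Un_cv_scal, Hw].
Qed.

Lemma Un_cv_geometric (u : nat -> R) l c :
  (forall n, Rabs (u n - l) <= c / 2 ^ n) -> Un_cv u l.
Proof.
  intros Hu eps Heps. destruct (cv_pow_half c eps Heps) as [N HN]. exists N. intros n Hn.
  specialize (HN n Hn). unfold R_dist in *. rewrite Rminus_0_r in HN.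
  eapply Rle_lt_trans; [apply Hu | eapply Rle_lt_trans; [apply Rle_abs | exact HN]].
Qed.

Lemma inv_pow2_pos l : 0 < / 2 ^ l.
Proof. apply Rinv_0_lt_compat, pow_lt. lra. Qed.

Lemma inv_pow2_le m l : (m <= l)%nat -> / 2 ^ l <= / 2 ^ m.
Proof. intros Hml. apply Rinv_le_contravar; [apply pow_lt; lra | apply Rle_pow; [lra | exact Hml]]. Qed.

(** * The constants [c_m] and [c_J] *)

Section Constants.
Variable X : NormedSpace.
Variable x : nat -> X.

Lemma comb_in_cm_set γ m a b : (m <= a <= b)%nat -> 0 < mass γ a b ->
  cm_set x m (vnorm (comb x γ a b) / mass γ a b).
Proof.
  intros Hab Ht. set (t := mass γ a b) in *.
  set (α := fun j => / t * restr γ a b (m + j)).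
  assert (Hα : forall k, (m <= k)%nat -> α (k - m)%nat = / t * restr γ a b k).
  { intros k Hk. unfold α. now replace (m + (k - m))%nat with k by lia. }
  assert (Ht' : 0 <= / t) by (left; apply Rinv_0_lt_compat, Ht).
  exists α, (vscal (/ t) (comb x γ a b)). split; [| split].
  - apply infinite_sum_eventually with (N := b). intros n Hn.
    rewrite <- (mass_shift α m n), (mass_ext _ (fun k => / t * restr γ a b k)) by (intros; apply Hα; lia).
    rewrite mass_scal, mass_restr by lia. rewrite Rabs_right by lra. fold t. field. lra.
  - apply vlim_eventually with (N := b). intros n Hn.
    rewrite <- (comb_shift X x α m n), (comb_ext X x _ (fun k => / t * restr γ a b k)) by (intros; apply Hα; lia).
    rewrite comb_scal, comb_restr by lia. reflexivity.
  - rewrite vnorm_scal, Rabs_right by lra. unfold Rdiv. ring.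
Qed.

Lemma cm_nonneg m c : is_cm x m c -> 0 <= c.
Proof. intros [_ Hc]. apply Hc. intros y [α [s [_ [_ ->]]]]. apply vnorm_ge0. Qed.

Lemma cm_lower_bound m c γ a b : is_cm x m c -> (m <= a <= b)%nat ->
  c * mass γ a b <= vnorm (comb x γ a b).
Proof.
  intros [Hlow _] Hab.
  destruct (Rle_lt_or_eq_dec 0 _ (mass_nonneg γ a b)) as [Ht | Ht].
  - specialize (Hlow _ (comb_in_cm_set γ m a b Hab Ht)).
    apply (Rmult_le_compat_r (mass γ a b)) in Hlow; [| lra]. unfold Rdiv in Hlow.
    rewrite Rmult_assoc, Rinv_l, Rmult_1_r in Hlow by lra. exact Hlow.
  - rewrite <- Ht, Rmult_0_r. apply vnorm_ge0.
Qed.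

Lemma cm_exists m : exists c, is_cm x m c.
Proof.
  apply (inf_exists _ 0).
  - exists (vnorm (x m)).
    pose proof (comb_in_cm_set (fun _ => 1) m m (S m)) as Hunit.
    unfold comb, mass in Hunit. replace (S m - m)%nat with 1%nat in Hunit by lia.
    simpl in Hunit. rewrite Rabs_R1, Rplus_0_r, vadd0, vscal1 in Hunit.
    replace (vnorm (x m)) with (vnorm (x m) / 1) by field. apply Hunit; lia || lra.
  - intros y [α [s [_ [_ ->]]]]. apply vnorm_ge0.
Qed.

(** [c_N] is approached by normalized finite combinations starting at [N]:
    truncate a nearly optimal series and renormalize it. *)
Lemma cm_near_inf N c eps : is_cm x N c -> 0 < eps ->
  exists γ e, (N <= e)%nat /\ mass γ N e = 1 /\ vnorm (comb x γ N e) <= c + eps.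
Proof.
  intros Hc Heps. pose proof (cm_nonneg N c Hc) as Hc0.
  destruct (inf_approx _ _ (eps / 4) Hc) as [y [[α [s [Hα [Hs ->]]]] Hy]]; [lra |].
  set (d := eps / (2 * (1 + c + eps))).
  assert (Hd : 0 < d) by (unfold d; apply Rdiv_lt_0_compat; lra).
  assert (Hd2 : d * (1 + c + eps) = eps / 2) by (unfold d; field; lra).
  destruct (Hα d Hd) as [N1 HN1]. destruct (Hs d Hd) as [N2 HN2].
  set (n := Nat.max N1 N2). set (γ := fun k => α (k - N)%nat). set (e := (N + S n)%nat).
  assert (Hmass : 1 - d < mass γ N e).
  { unfold γ, e. rewrite mass_shift.
    specialize (HN1 n ltac:(lia)). unfold R_dist in HN1. apply Rabs_def2 in HN1. lra. }
  assert (Hcomb : vnorm (comb x γ N e) <= vnorm s + d).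
  { unfold γ, e. rewrite comb_shift. specialize (HN2 (S n) ltac:(lia)).
    pose proof (vnorm_triangle _ (vsub (vpsum (fun k => vscal (α k) (x (N + k)%nat)) (S n)) s) s).
    rewrite vsub_add in H. lra. }
  set (T := mass γ N e) in *.
  assert (HT : 0 < T) by nra.
  exists (fun k => / T * γ k), e. split; [unfold e; lia | split].
  - rewrite mass_scal, Rabs_right by (left; apply Rinv_0_lt_compat, HT). fold T. field. lra.
  - rewrite comb_scal, vnorm_scal, Rabs_right by (left; apply Rinv_0_lt_compat, HT).
    apply (Rmult_le_reg_l T); [exact HT |].
    rewrite <- Rmult_assoc, Rinv_r, Rmult_1_l by lra. nra.
Qed.

Lemma cJ_tail_lower_bound cJ l : is_cJ x cJ -> 0 < cJ ->
  exists m, forall γ a b, (m <= a <= b)%nat ->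
    (1 - / 2 ^ l) * cJ * mass γ a b <= vnorm (comb x γ a b).
Proof.
  intros HJ HcJ. pose proof (inv_pow2_pos l).
  destruct (lub_approx _ _ (/ 2 ^ l * cJ) HJ) as [c [[m Hm] Hc]]; [nra |].
  exists m. intros γ a b Hab. eapply Rle_trans; [| apply (cm_lower_bound m c γ a b Hm Hab)].
  apply Rmult_le_compat_r; [apply mass_nonneg | lra].
Qed.

Lemma cJ_small_block cJ l s : is_cJ x cJ -> 0 < cJ ->
  exists p : (nat -> R) * nat, (s <= snd p)%nat /\ mass (fst p) s (snd p) = 1 /\
    vnorm (comb x (fst p) s (snd p)) <= (1 + / 2 ^ l) * cJ.
Proof.
  intros HJ HcJ. pose proof (inv_pow2_pos l).
  destruct (cm_exists s) as [c Hc].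
  assert (HccJ : c <= cJ) by (apply (proj1 HJ); now exists s).
  destruct (cm_near_inf s c (/ 2 ^ l * cJ) Hc) as [γ [e [Hse [Hm Hn]]]]; [nra |].
  exists (γ, e). simpl. repeat split; [exact Hse | exact Hm | lra].
Qed.

End Constants.
(** * Construction of the block sequence

    Given, for each [l], a threshold [floor l] beyond which finite combinations
    have norm at least [(1 - 2^-l) c_J] times their mass, and a way [pick l s] to
    find, beyond any [s], a normalized block of norm at most [(1 + 2^-l) c_J],
    blocks are laid out consecutively: block [l] occupies [start l, start (S l)),
    carries the picked coefficients on [start l, stop l) and zeros after them, and
    the next block starts beyond [floor (S l)]. *)

Section BlockConstruction.
Variable X : NormedSpace.
Variable x : nat -> X.
Variable cJ : R.
Hypothesis cJ_nonneg : 0 <= cJ.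
Variable floor : nat -> nat.
Hypothesis floor_spec : forall l γ a b, (floor l <= a <= b)%nat ->
  (1 - / 2 ^ l) * cJ * mass γ a b <= vnorm (comb x γ a b).
Variable pick : nat -> nat -> (nat -> R) * nat.
Hypothesis pick_spec : forall l s,
  (s <= snd (pick l s))%nat /\ mass (fst (pick l s)) s (snd (pick l s)) = 1 /\
  vnorm (comb x (fst (pick l s)) s (snd (pick l s))) <= (1 + / 2 ^ l) * cJ.

Fixpoint start (l : nat) : nat :=
  match l with
  | O => floor O
  | S l => Nat.max (snd (pick l (start l))) (floor (S l))
  end.

Definition coef (l : nat) : nat -> R := fst (pick l (start l)).
Definition stop (l : nat) : nat := snd (pick l (start l)).

Definition block_index (k : nat) : nat :=
  epsilon (inhabits 0%nat) (fun l => (start l <= k < start (S l))%nat).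

Definition lam (k : nat) : R :=
  restr (coef (block_index k)) (start (block_index k)) (stop (block_index k)) k.

Definition z (l : nat) : X := comb x lam (start l) (start (S l)).

Lemma start_stop l : (floor l <= start l <= stop l)%nat /\ (stop l <= start (S l))%nat.
Proof.
  destruct (pick_spec l (start l)) as [Hstop _]. fold (stop l) in Hstop.
  assert (Hfloor : (floor l <= start l)%nat) by (destruct l; simpl; lia).
  assert (Hnext : (stop l <= start (S l))%nat) by (simpl; unfold stop; lia).
  lia.
Qed.

Lemma start_mono l l' : (l <= l')%nat -> (start l <= start l')%nat.
Proof.
  induction 1 as [| l' _ IH]; [lia |].
  destruct (start_stop l') as [_ Hnext]. destruct (start_stop l'). lia.
Qed.

Lemma block_index_spec l k : (start l <= k < start (S l))%nat -> block_index k = l.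
Proof.
  intros Hk.
  pose proof (epsilon_spec (inhabits 0%nat) (fun l => (start l <= k < start (S l))%nat)
    (ex_intro _ l Hk)) as Hl'.
  cbv beta in Hl'. fold (block_index k) in Hl'. set (l' := block_index k) in *.
  destruct (Nat.lt_total l l') as [Hlt | [Heq | Hgt]]; [| easy |].
  - pose proof (start_mono (S l) l' Hlt). lia.
  - pose proof (start_mono (S l') l Hgt). lia.
Qed.

Lemma lam_block l k : (start l <= k < start (S l))%nat ->
  lam k = restr (coef l) (start l) (stop l) k.
Proof. intros Hk. unfold lam. now rewrite (block_index_spec l k Hk). Qed.

Lemma z_comb l : z l = comb x (coef l) (start l) (stop l).
Proof.
  destruct (start_stop l). unfold z. rewrite (comb_ext _ _ _ _ _ _ (lam_block l)).
  apply comb_restr; lia.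
Qed.

Lemma lam_mass l : mass lam (start l) (start (S l)) = 1.
Proof.
  destruct (start_stop l). rewrite (mass_ext _ _ _ _ (lam_block l)), mass_restr by lia.
  apply (pick_spec l (start l)).
Qed.

Lemma z_norm_bounds l : (1 - / 2 ^ l) * cJ <= vnorm (z l) <= (1 + / 2 ^ l) * cJ.
Proof.
  destruct (start_stop l). destruct (pick_spec l (start l)) as [_ [Hmass Hnorm]].
  rewrite z_comb. split; [| exact Hnorm].
  pose proof (floor_spec l (coef l) (start l) (stop l) ltac:(lia)) as Hlow.
  unfold coef, stop in *. rewrite Hmass, Rmult_1_r in Hlow. exact Hlow.
Qed.

Lemma z_block_seq : is_block_seq x z.
Proof.
  exists (fun l => seq (start l) (start (S l) - start l)), lam.
  split; [| split; [| split]].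
  - intros l. apply seq_NoDup.
  - intros l i j Hi Hj. apply in_range in Hi, Hj. lia.
  - exact lam_mass.
  - reflexivity.
Qed.

Lemma z_norm_cv : Un_cv (fun l => vnorm (z l)) cJ.
Proof.
  apply Un_cv_geometric with cJ. intros n. pose proof (z_norm_bounds n).
  apply Rabs_le. unfold Rdiv. lra.
Qed.

(** The coefficients, with respect to [(x_n)], of a combination [Σ α_l z_l]. *)
Definition spread (α : nat -> R) (k : nat) : R := α (block_index k) * lam k.

Lemma spread_block α l k : (start l <= k < start (S l))%nat -> spread α k = α l * lam k.
Proof. intros Hk. unfold spread. now rewrite (block_index_spec l k Hk). Qed.

Lemma block_comb α m L :
  vlsum (fun l => vscal (α l) (z l)) (seq m L) = comb x (spread α) (start m) (start (m + L)).
Proof.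
  induction L as [| L IH].
  - unfold comb. now rewrite Nat.add_0_r, Nat.sub_diag.
  - rewrite seq_S, vlsum_app, IH, Nat.add_succ_r.
    rewrite (comb_split _ _ _ (start m) (start (m + L)) (start (S (m + L)))) by (split; apply start_mono; lia).
    cbn [vlsum fold_right]. rewrite vadd0, (comb_ext _ _ _ _ _ _ (spread_block α (m + L))).
    now rewrite comb_scal.
Qed.

Lemma block_mass α m L :
  rlsum (fun l => Rabs (α l)) (seq m L) = mass (spread α) (start m) (start (m + L)).
Proof.
  induction L as [| L IH].
  - unfold mass. now rewrite Nat.add_0_r, Nat.sub_diag.
  - rewrite seq_S, rlsum_app, IH, Nat.add_succ_r.
    rewrite (mass_split _ (start m) (start (m + L)) (start (S (m + L)))) by (split; apply start_mono; lia).
    cbn [rlsum fold_right]. rewrite (mass_ext _ _ _ _ (spread_block α (m + L))).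
    rewrite mass_scal, lam_mass. ring.
Qed.

Lemma block_comb_lower α m L :
  (1 - / 2 ^ m) * cJ * rlsum (fun l => Rabs (α l)) (seq m L)
  <= vnorm (vlsum (fun l => vscal (α l) (z l)) (seq m L)).
Proof.
  rewrite block_comb, block_mass. apply floor_spec.
  destruct (start_stop m). pose proof (start_mono m (m + L)). lia.
Qed.

Lemma block_comb_upper α m L :
  vnorm (vlsum (fun l => vscal (α l) (z l)) (seq m L))
  <= (1 + / 2 ^ m) * cJ * rlsum (fun l => Rabs (α l)) (seq m L).
Proof.
  eapply Rle_trans; [apply vlsum_norm_le |]. rewrite <- rlsum_scal. apply rlsum_le.
  intros l Hl. apply in_seq in Hl. rewrite vnorm_scal.
  assert (Hz : vnorm (z l) <= (1 + / 2 ^ m) * cJ).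
  { pose proof (z_norm_bounds l). pose proof (inv_pow2_le m l ltac:(lia)). nra. }
  rewrite (Rmult_comm _ (Rabs (α l))). apply Rmult_le_compat_l; [apply Rabs_pos | exact Hz].
Qed.

Lemma z_estimate α m σ s :
  infinite_sum (fun k => Rabs (α (m + k)%nat)) σ ->
  has_sum (fun k => vscal (α (m + k)%nat) (z (m + k)%nat)) s ->
  (1 - / 2 ^ m) * cJ * σ <= vnorm s /\ vnorm s <= (1 + / 2 ^ m) * cJ * σ.
Proof.
  intros Hσ Hs.
  apply limit_of_scaled_bounds with
    (u := fun n => vnorm (vlsum (fun l => vscal (α l) (z l)) (seq m (S n))))
    (w := fun n => rlsum (fun l => Rabs (α l)) (seq m (S n))).
  - apply (Un_cv_ext (fun n => vnorm (vpsum (fun k => vscal (α (m + k)%nat) (z (m + k)%nat)) (n + 1)))).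
    + intros n. now rewrite vlsum_seq, Nat.add_1_r.
    + apply (CV_shift' (fun n => vnorm (vpsum (fun k => vscal (α (m + k)%nat) (z (m + k)%nat)) n))).
      apply vlim_norm, Hs.
  - apply (Un_cv_ext (fun n => sum_f_R0 (fun k => Rabs (α (m + k)%nat)) n)); [| exact Hσ].
    intros n. now rewrite rlsum_seq.
  - intros n. split; [apply block_comb_lower | apply block_comb_upper].
Qed.

End BlockConstruction.

Theorem lemma5p2 (X : BanachSpace) (x : nat -> X) (cJ : R) :
  bounded_seq x -> is_cJ x cJ -> 0 < cJ ->
  exists z : nat -> X,
    is_block_seq x z /\
    Un_cv (fun l => vnorm (z l)) cJ /\
    (forall (alpha : nat -> R), ell1 alpha ->
      forall (m : nat) (S : R) (s : X),
        infinite_sum (fun k => Rabs (alpha (m + k)%nat)) S ->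
        has_sum (fun k => vscal (alpha (m + k)%nat) (z (m + k)%nat)) s ->
        (1 - / 2 ^ m) * cJ * S <= vnorm s /\
        vnorm s <= (1 + / 2 ^ m) * cJ * S).
Proof.
  intros _ HJ HcJ.
  destruct (choice _ (fun l => cJ_tail_lower_bound X x cJ l HJ HcJ)) as [floor Hfloor].
  pose proof (fun l => choice _ (fun s => cJ_small_block X x cJ l s HJ HcJ)) as Hpicks.
  destruct (choice _ Hpicks) as [pick Hpick].
  exists (z X x floor pick). split; [| split].
  - exact (z_block_seq X x cJ floor pick Hpick).
  - exact (z_norm_cv X x cJ floor Hfloor pick Hpick).
  - intros alpha _ m S s. apply (z_estimate X x cJ (Rlt_le _ _ HcJ) floor Hfloor pick Hpick).
Qed.
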